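(* For every $n\ge 1$, the path $P_n$ on $n$ vertices satisfies $\phi(P_n)<0.81\cdot 6^{n/4}$.
   Context: A subset $F$ of vertices of a graph $G$ is a dissociation set if $G[F]$ has maximum degree at most $1$; a maximal dissociation set is one not properly contained in another dissociation set; $\phi(G)$ is the number of maximal dissociation sets of $G$. *)

From mathcomp Require Import all_boot.
Set Implicit Arguments. Unset Strict Implicit. Unset Printing Implicit Defensive.

(* A simple graph on a finite vertex type T is given by its adjacency relation
   e (assumed symmetric and irreflexive; for the path below it is). *)

Definition dissociation (T : finType) (e : rel T) (F : {set T}) : bool :=
  [forall x in F, #|[set y in F | e x y]| <= 1].

Definition maximal_dissociation (T : finType) (e : rel T) (F : {set T}) : bool :=
  dissociation e F && [forall F' : {set T}, (F \proper F') ==> ~~ dissociation e F'].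

Definition phi (T : finType) (e : rel T) : nat :=
  #|[set F : {set T} | maximal_dissociation e F]|.

Definition path_rel (n : nat) : rel 'I_n :=
  fun i j => (i.+1 == j :> nat) || (j.+1 == i :> nat).
Arguments path_rel n : clear implicits.

From Stdlib Require Import Reals Lra.
From mathcomp Require Import all_boot zify.

(* Maximal dissociation sets of the path P_n grow like (31/20)^n < 6^(n/4).

   A vertex set F of P_n is encoded by its padded characteristic word: the bit
   string of length n+4 whose position j is 1 iff vertex j-2 lies in F (two
   zeros on each side).  F is a dissociation set iff this word has no three
   consecutive 1s, and F is maximal iff moreover every 0 is blocked, i.e. its
   window a b 0 d e of length five has a = b = 1, b = d = 1 or d = e = 1.
   Maximality is therefore a condition on all length-5 windows ('all_good'),
   and phi(P_n) counts the bit strings s of length n whose padded word is good.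

   These strings are counted by a transfer matrix on the 16 states given by
   the last four letters read.  A weight w on the states with 20 * (M w) <=
   31 * w, which also dominates the number of completions by 9 free bits,
   bounds the completions by 9 + j free bits by (31/20)^j * w.  Together with
   a direct enumeration for n <= 10 this gives 100 * 20^n * phi(P_n) < 81 *
   31^n, and (31/20)^4 < 6 turns this into the real-valued bound. *)

(* A window a b c d e of a padded word is good when its middle bit c is not
   the middle of a run of three 1s and, if c is 0, it cannot be switched to 1
   without creating such a run. *)
Definition good_window (a b c d e : bool) : bool :=
  ~~ [&& b, c & d] && [|| c, a && b, b && d | d && e].

Fixpoint all_good (s : seq bool) : bool :=
  match s with
  | a :: ((b :: c :: d :: e :: _) as t) => good_window a b c d e && all_good t
  | _ => true
  end.

Lemma all_goodP (s : seq bool) :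
  all_good s = [forall j : 'I_(size s), (j.+4 < size s) ==>
    good_window (nth false s j) (nth false s j.+1) (nth false s j.+2)
                (nth false s j.+3) (nth false s j.+4)].
Proof.
apply/idP/forallP.
- elim: s => [|a s IH]; first by move=> _ [].
  case: s IH => [|b [|c [|d [|e r]]]] IH /= good_s j; apply/implyP => /= hj;
    try lia.
  case/andP: good_s => good_a good_r.
  case: j hj => [[|k] hk] /= hj //.
  have hk' : k < size [:: b, c, d, e & r] by rewrite /=; lia.
  exact: (implyP (IH good_r (Ordinal hk'))).
- elim: s => [|a s IH] //= good_j.
  case: s IH good_j => [|b [|c [|d [|e r]]]] IH good_j //=.
  apply/andP; split; first exact: (implyP (good_j ord0)).
  apply: IH => j; apply/implyP => hj.
  have hk : j.+1 < size [:: a, b, c, d, e & r] by rewrite /= in hj *; lia.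
  exact: (implyP (good_j (Ordinal hk))).
Qed.

Lemma run_after_insert (h : nat -> bool) (p x : nat) :
  [&& h x || (x == p), h x.+1 || (x.+1 == p) & h x.+2 || (x.+2 == p)] =
  [&& h x, h x.+1 & h x.+2] ||
  [|| (x == p) && h x.+1 && h x.+2, (x.+1 == p) && h x && h x.+2
    | (x.+2 == p) && h x && h x.+1].
Proof. by case: (x =P p); case: (x.+1 =P p); case: (x.+2 =P p); lia. Qed.

Section Dissociation.
Variables (T : finType) (e : rel T).

Lemma dissociation_sub (F G : {set T}) :
  F \subset G -> dissociation e G -> dissociation e F.
Proof.
move=> sFG /forallP dG; apply/forallP => x; apply/implyP => xF.
apply: leq_trans (implyP (dG x) (subsetP sFG _ xF)).
apply: subset_leq_card; apply/subsetP => y; rewrite !inE => /andP [yF ->].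
by rewrite (subsetP sFG _ yF).
Qed.

Lemma maximal_dissociationE (F : {set T}) :
  maximal_dissociation e F =
  dissociation e F && [forall v, (v \in F) || ~~ dissociation e (v |: F)].
Proof.
rewrite /maximal_dissociation; case dF: (dissociation e F) => //=.
apply/forallP/forallP => maxF v.
- case vF: (v \in F) => //=; apply: (implyP (maxF (v |: F))).
  by rewrite properE subsetUr subUset sub1set vF subxx.
- apply/implyP => /properP [sFG [w wG wF]]; apply/negP => dG.
  move: (maxF w); rewrite (negbTE wF) => /negP; apply.
  by apply: dissociation_sub dG; rewrite subUset sub1set wG sFG.
Qed.

End Dissociation.

Section PathSets.
Variable n : nat.
Implicit Types (F : {set 'I_n}) (x v : 'I_n).

Definition occ F (j : nat) : bool := [exists i in F, i.+2 == j].

Lemma occE F x : occ F x.+2 = (x \in F).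
Proof.
apply/existsP/idP => [[i /andP [iF /eqP /succn_inj /succn_inj /val_inj <-]] //|].
by exists x; rewrite eqxx andbT.
Qed.

Lemma occ_range {F} {j : nat} : occ F j -> 2 <= j < n.+2.
Proof. by case/existsP => i /andP [_ /eqP <-]; rewrite !ltnS ltn_ord. Qed.

Lemma occ_setU1 F v j : occ (v |: F) j = occ F j || (j == v.+2).
Proof.
apply/existsP/orP => [[i /andP [/setU1P [-> | iF] /eqP <-]] | [/existsP [i] | /eqP ->]].
- by right.
- by left; apply/existsP; exists i; rewrite iF eqxx.
- by case/andP=> iF ij; exists i; rewrite setU1r.
- by exists v; rewrite setU11 eqxx.
Qed.

(* The neighbours of vertex x sit at positions x+1 and x+3 of the word. *)
Lemma card_nbrs_le1 F x :
  (#|[set y in F | path_rel n x y]| <= 1) = ~~ (occ F x.+1 && occ F x.+3).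
Proof.
apply/card_le1_eqP/idP => [nbrs_eq | not_both y z].
- apply/negP => /andP [/[dup] /occ_range lo left_in /[dup] /occ_range hi right_in].
  have lt_l : x.-1 < n by have := ltn_ord x; lia.
  have lt_r : x.+1 < n by lia.
  have := nbrs_eq (Ordinal lt_l) (Ordinal lt_r).
  rewrite !inE -!occE /path_rel /= prednK; last lia.
  by rewrite left_in right_in !eqxx orbT => /(_ isT isT) /(congr1 val) /=; lia.
- rewrite !inE -!occE /path_rel => /andP [yF ry] /andP [zF rz]; apply: ord_inj.
  case/orP: ry => /eqP ry; case/orP: rz => /eqP rz; try lia;
    case/negP: not_both.
  + have -> : x.+3 = y.+2 by lia.
    have -> : x.+1 = z.+2 by lia.
    by rewrite yF zF.
  + have -> : x.+3 = z.+2 by lia.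
    have -> : x.+1 = y.+2 by lia.
    by rewrite yF zF.
Qed.

Lemma dissociationE F :
  dissociation (path_rel n) F =
  [forall x : 'I_n, ~~ [&& occ F x.+1, occ F x.+2 & occ F x.+3]].
Proof.
apply: eq_forallb => x; rewrite card_nbrs_le1 occE.
by case: (x \in F); case: (occ F x.+1); case: (occ F x.+3).
Qed.

Lemma insertion_blocked F v :
  dissociation (path_rel n) F -> v \notin F ->
  ~~ dissociation (path_rel n) (v |: F) =
  [|| occ F v && occ F v.+1, occ F v.+1 && occ F v.+3 | occ F v.+3 && occ F v.+4].
Proof.
rewrite !dissociationE negb_forall => /forallP no_run vF.
under eq_existsb => x do
  rewrite negbK !occ_setU1 run_after_insert (negbTE (no_run x)) /= !eqSS.
apply/existsP/idP => [[x] | ].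
- case/or3P => /andP [/andP [/eqP e a] b].
  + by rewrite e in a b; rewrite a b !orbT.
  + by rewrite e in a b; rewrite a b orbT.
  + by rewrite -e a b.
- case/or3P => /andP [a b].
  + have [v_ge2 _] := andP (occ_range a).
    have lt : v.-1 < n by have := ltn_ord v; lia.
    by exists (Ordinal lt); rewrite /= prednK ?a ?b ?eqxx //; lia.
  + by exists v; rewrite eqxx a b orbT.
  + have [_ v_lt] := andP (occ_range b).
    have lt : v.+1 < n by lia.
    by exists (Ordinal lt); rewrite /= eqxx a b.
Qed.

Lemma maximalE F :
  maximal_dissociation (path_rel n) F =
  [forall j : 'I_n,
    good_window (occ F j) (occ F j.+1) (occ F j.+2) (occ F j.+3) (occ F j.+4)].
Proof.
rewrite maximal_dissociationE; case dF: (dissociation _ F) => /=.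
- have /forallP no_run : [forall x : 'I_n, ~~ [&& occ F x.+1, occ F x.+2 & occ F x.+3]].
    by rewrite -dissociationE dF.
  apply: eq_forallb => v; rewrite /good_window no_run occE.
  by case vF: (v \in F); rewrite //= insertion_blocked ?vF.
- symmetry; apply/negbTE; move: dF; rewrite dissociationE => /negbT /forallPn [j run].
  by apply/forallPn; exists j; rewrite /good_window negbK in run *; rewrite run.
Qed.

End PathSets.

Arguments occ {n}.
Arguments occ_range {n F j}.

Definition pad (s : seq bool) : seq bool := [:: false, false & s ++ [:: false; false]].

Fixpoint words (k : nat) : seq (seq bool) :=
  if k is k'.+1 then map (cons false) (words k') ++ map (cons true) (words k')
  else [:: [::]].

Lemma mem_words k s : (s \in words k) = (size s == k).
Proof.
elim: k s => [|k IH] [|b s] //=; rewrite mem_cat.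
- by apply/orP => -[] /mapP [].
- rewrite eqSS -IH; apply/orP/idP => [[] /mapP [t t_in [_ ->]] // | s_in].
  by case: b; [right | left]; apply: map_f.
Qed.

Lemma uniq_words k : uniq (words k).
Proof.
elim: k => [|k IH] //=; rewrite cat_uniq !map_inj_uniq ?IH //=; try by move=> ? ? [].
by rewrite andbT; apply/hasPn => _ /mapP [t _ ->]; apply/mapP => -[].
Qed.

Definition set_of_word (n : nat) (s : seq bool) : {set 'I_n} :=
  [set i : 'I_n | nth false s i].

Lemma occ_set_of_word n s j :
  size s = n -> occ (set_of_word n s) j = nth false (pad s) j.
Proof.
move=> size_s; case: j => [|[|j]]; try by apply/negbTE/negP => /occ_range.
rewrite /= nth_cat size_s; case: ltnP => [j_lt | j_ge].
- by rewrite -[j]/(nat_of_ord (Ordinal j_lt)) occE inE.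
- have -> : nth false [:: false; false] (j - n) = false.
    by move: (j - n) => [|[|k]] /=; rewrite ?nth_nil.
  by apply/negbTE/negP => /occ_range; lia.
Qed.

Lemma maximal_set_of_word n s : size s = n ->
  maximal_dissociation (path_rel n) (set_of_word n s) = all_good (pad s).
Proof.
move=> size_s; rewrite maximalE all_goodP.
have size_pad : size (pad s) = n.+4 by rewrite /= size_cat size_s addn2.
apply/forallP/forallP => [good j | good j].
- apply/implyP => j_lt4; have j_lt : j < n by move: size_pad; lia.
  by move: (good (Ordinal j_lt)); rewrite !occ_set_of_word.
- have j_lt : j < size (pad s) by rewrite size_pad; have := ltn_ord j; lia.
  move: (implyP (good (Ordinal j_lt))); rewrite !occ_set_of_word //; apply.
  by move: size_pad (ltn_ord j) => /=; lia.
Qed.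

Definition good_count (n : nat) : nat := count (fun s => all_good (pad s)) (words n).

(* phi(P_n) counts the good strings: set_of_word maps the good strings of
   length n injectively onto the maximal dissociation sets. *)
Lemma phi_path_good_count n : phi (path_rel n) = good_count n.
Proof.
set good_words := filter (fun s => all_good (pad s)) (words n).
have uniq_sets : uniq (map (set_of_word n) good_words).
  rewrite map_inj_in_uniq ?filter_uniq ?uniq_words //.
  move=> s1 s2; rewrite !mem_filter !mem_words.
  move=> /andP [_ /eqP s1n] /andP [_ /eqP s2n] eq12.
  apply: (@eq_from_nth _ false) => [|i]; first by rewrite s1n s2n.
  rewrite s1n => i_lt.
  have := congr1 (fun F : {set 'I_n} => Ordinal i_lt \in F) eq12.
  by rewrite /= !inE.
have max_sets : [set F | maximal_dissociation (path_rel n) F] =i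
                map (set_of_word n) good_words.
  move=> F; rewrite inE; apply/idP/mapP => [maxF | [s]].
  - have setK : set_of_word n (mkseq (fun i => occ F i.+2) n) = F.
      by apply/setP => i; rewrite inE nth_mkseq // occE.
    exists (mkseq (fun i => occ F i.+2) n) => //.
    by rewrite mem_filter mem_words size_mkseq eqxx andbT
               -(maximal_set_of_word n) ?size_mkseq ?setK.
  - by rewrite mem_filter mem_words => /andP [good /eqP size_s] ->;
      rewrite maximal_set_of_word.
by rewrite /phi (eq_card max_sets) (card_uniqP uniq_sets) size_map size_filter.
Qed.

Definition completions (k : nat) (a b c d : bool) : nat :=
  count (fun u => all_good [:: a, b, c, d & u ++ [:: false; false]]) (words k).

(* The padded word of a string x y u of length k+2 starts with the state
   0 0 x y, so good strings split into completions of these four states. *)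
Lemma good_count_completions k :
  good_count k.+2 =
  completions k false false false false + completions k false false false true +
  completions k false false true false + completions k false false true true.
Proof. by rewrite /good_count /= !map_cat !count_cat !count_map !addnA. Qed.

Lemma count_guard (T : Type) (g : bool) (P : pred T) (s : seq T) :
  count (fun x => g && P x) s = if g then count P s else 0.
Proof. by case: g; elim: s => //= x s ->. Qed.

Lemma completionsS k a b c d :
  completions k.+1 a b c d =
  (if good_window a b c d false then completions k b c d false else 0) +
  (if good_window a b c d true then completions k b c d true else 0).
Proof. by rewrite /completions [words _]/= count_cat !count_map -!count_guard. Qed.

(* A weight on the 16 states a b c d (read as the binary number abcd) that the
   transfer step contracts by the factor 20/31. *)
Definition weight (a b c d : bool) : nat :=
  nth 0 [:: 2; 10; 15; 14; 2; 20; 19; 2; 2; 10; 15; 14; 8; 20; 19; 2]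
    (8 * a + 4 * b + 2 * c + d).

Lemma weight_step a b c d :
  20 * ((if good_window a b c d false then weight b c d false else 0) +
        (if good_window a b c d true then weight b c d true else 0))
  <= 31 * weight a b c d.
Proof. by case: a; case: b; case: c; case: d. Qed.

Lemma completions_base a b c d : completions 9 a b c d <= weight a b c d.
Proof. by case: a; case: b; case: c; case: d; vm_compute. Qed.

Lemma completions_bound j a b c d :
  20 ^ j * completions (9 + j) a b c d <= 31 ^ j * weight a b c d.
Proof.
elim: j a b c d => [|j IH] a b c d; first by rewrite !mul1n completions_base.
pose Cn x := if good_window a b c d x then completions (9 + j) b c d x else 0.
pose Wn x := if good_window a b c d x then weight b c d x else 0.
have branch x : 20 ^ j * Cn x <= 31 ^ j * Wn x.
  by rewrite /Cn /Wn; case: good_window; rewrite ?muln0.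
rewrite addnS completionsS !expnS -!mulnA -/(Cn false) -/(Cn true).
apply: (@leq_trans (20 * (31 ^ j * (Wn false + Wn true)))).
  by rewrite leq_mul2l /= !mulnDr; apply: leq_add.
by rewrite mulnCA [leqRHS]mulnCA leq_mul2l weight_step orbT.
Qed.

(* The state 0 0 x y after the left padding has weight 2, 10, 15 or 14, so
   20^j * good_count (11 + j) <= 41 * 31^j, which beats the target. *)
Lemma good_count_large j :
  100 * 20 ^ (11 + j) * good_count (11 + j) < 81 * 31 ^ (11 + j).
Proof.
have total : 20 ^ j * good_count (11 + j) <= 41 * 31 ^ j.
  rewrite (good_count_completions (9 + j)) !mulnDr.
  have := completions_bound j false false false false.
  have := completions_bound j false false false true.
  have := completions_bound j false false true false.
  have := completions_bound j false false true true.
  rewrite /weight /=; lia.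
have pos : 0 < 31 ^ j by rewrite expn_gt0.
rewrite !expnD; nia.
Qed.

Lemma small_good_counts :
  map good_count (iota 1 10) = [:: 1; 1; 3; 3; 4; 6; 9; 12; 16; 24].
Proof. by vm_compute. Qed.

Lemma good_count_small n :
  0 < n <= 10 -> 100 * 20 ^ n * good_count n < 81 * 31 ^ n.
Proof.
case/andP => n_gt0 n_le10.
have := congr1 (nth 0 ^~ n.-1) small_good_counts.
rewrite {1}(nth_map 0) ?size_iota ?nth_iota ?add1n ?prednK; try lia.
move=> ->; move: n_gt0 n_le10.
do 11! (case: n => [|n]; first by rewrite [nth _ _ _]/=; lia).
by move=> _ too_big; exfalso; lia.
Qed.

Lemma phi_path_bound n : 0 < n -> 100 * 20 ^ n * phi (path_rel n) < 81 * 31 ^ n.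
Proof.
rewrite phi_path_good_count => n_gt0; case: (leqP n 10) => [n_le10 | n_gt10].
- by apply: good_count_small; rewrite n_gt0.
- by rewrite -(subnKC n_gt10) good_count_large.
Qed.

Open Scope R_scope.

Lemma INR_expn (m k : nat) : INR (m ^ k)%N = INR m ^ k.
Proof. by elim: k => [|k IH] //; rewrite expnS mult_INR IH. Qed.

Lemma pow_lt_Rpower_quarter (r b : R) (n : nat) :
  0 < r -> r ^ 4 < b -> (0 < n)%N -> r ^ n < Rpower b (INR n / 4).
Proof.
move=> r_pos r4_lt n_gt0.
have n_pos : 0 < INR n by apply: lt_0_INR; apply/ltP.
have ln_lt : INR 4 * ln r < ln b.
  by rewrite -ln_pow //; apply: ln_increasing => //; apply: pow_lt.
rewrite INR_IZR_INZ /= in ln_lt.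
rewrite -Rpower_pow // /Rpower; apply: exp_increasing; nra.
Qed.

Lemma phi_path_real n :
  (0 < n)%N -> INR (phi (path_rel n)) < 81 / 100 * (31 / 20) ^ n.
Proof.
move=> /phi_path_bound /ltP /lt_INR; rewrite !mult_INR !INR_expn.
have -> : INR 100 = 100 by rewrite INR_IZR_INZ.
have -> : INR 81 = 81 by rewrite INR_IZR_INZ.
have -> : INR 20 = 20 by rewrite INR_IZR_INZ.
have -> : INR 31 = 31 by rewrite INR_IZR_INZ.
have pow20_pos : 0 < 20 ^ n by apply: pow_lt; lra.
have ratio : (31 / 20) ^ n * 20 ^ n = 31 ^ n.
  by rewrite -Rpow_mult_distr; congr (_ ^ _); field.
nra.
Qed.

Theorem lemma2p5 (n : nat) :
  leq 1 n ->
  INR (phi (path_rel n)) < (81 / 100) * Rpower 6 (INR n / 4).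
Proof.
move=> n_gt0; apply: Rlt_trans (phi_path_real n n_gt0) _.
apply: Rmult_lt_compat_l; first lra.
by apply: pow_lt_Rpower_quarter => //; lra.
Qed.
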